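(* Let $X$ be the set of continuous functions $f:[1,\infty)\to\mathbb{R}$ such that $f(x)\ge x$ for all $1\le x<2$, and $(y+1)f(y)+f(x)\ge (y+1)x$ for all $x\ge 2$ and all $1\le y\le x$. For a real number $c$, let $f_c(x)=x^c$ on $[1,\infty)$. Then $f_c\in X$ if and only if $c\ge \frac{1+\sqrt5}{2}$. In particular, $X$ is nonempty. *)

From Stdlib Require Import Reals Lra.
Open Scope R_scope.

(* The domain [1, +oo). Functions are modelled as f : R -> R; only their values
   on [1, +oo) matter. *)
Definition dom1 (x : R) : Prop := 1 <= x.

Definition cont_on_dom1 (f : R -> R) : Prop :=
  forall x, dom1 x -> limit1_in f dom1 (f x) x.

Definition inX (f : R -> R) : Prop :=
  cont_on_dom1 f /\
  (forall x, 1 <= x < 2 -> f x >= x) /\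
  (forall x y, x >= 2 -> 1 <= y <= x -> (y + 1) * f y + f x >= (y + 1) * x).

Definition fpow (c : R) (x : R) : R := Rpower x c.

Definition golden : R := (1 + sqrt 5) / 2.

(* Since X is closed under pointwise increase and [x^c] increases with [c] on
   [1, +oo), sufficiency reduces to [c = g], the golden ratio.  There the
   weights [1/g] and [1/g^2] sum to 1 (because [g^2 = g + 1]), and weighted
   AM-GM, i.e. convexity of [exp], gives [y x <= y^(g+1)/g^2 + x^g/g] and
   [x <= x^g/g^2 + g]; adding them yields the defining inequality of X.
   For [1 <= c < g] the interval [(c - 1, 1/c)] is nonempty, and for [t]
   inside it and [y = x^t] every term on the left of the inequality is
   [o(x^(t+1))], while the right-hand side exceeds [x^(t+1)]. *)

From Stdlib Require Import Reals Lra Psatz.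
Open Scope R_scope.

Lemma Rpower_pos (x y : R) : 0 < Rpower x y.
Proof. apply exp_pos. Qed.

Lemma exp_convex (l m p q : R) : 0 <= l -> 0 <= m -> l + m = 1 ->
  exp (l * p + m * q) <= l * exp p + m * exp q.
Proof.
  intros Hl Hm Hlm. set (M := l * p + m * q).
  (* tangent line of [exp] at [M] *)
  assert (Hp : exp p >= exp M * (1 + (p - M))).
  { replace (exp p) with (exp M * exp (p - M)) by (rewrite <- exp_plus; f_equal; ring).
    pose proof (exp_ineq1_le (p - M)); pose proof (exp_pos M); nra. }
  assert (Hq : exp q >= exp M * (1 + (q - M))).
  { replace (exp q) with (exp M * exp (q - M)) by (rewrite <- exp_plus; f_equal; ring).
    pose proof (exp_ineq1_le (q - M)); pose proof (exp_pos M); nra. }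
  assert (Htan : l * (exp M * (1 + (p - M))) + m * (exp M * (1 + (q - M))) = exp M).
  { unfold M. replace m with (1 - l) by lra. ring. }
  nra.
Qed.

Lemma cont_on_dom1_fpow (c : R) : cont_on_dom1 (fpow c).
Proof.
  intros x Hx eps Heps.
  assert (D : derivable_pt (fpow c) x).
  { exists (c * Rpower x (c - 1)). apply derivable_pt_lim_power. unfold dom1 in Hx; lra. }
  destruct (derivable_continuous_pt _ _ D eps Heps) as [alp [Halp H]].
  exists alp; split; [exact Halp|]. intros y [_ Hy].
  destruct (Req_dec x y) as [<-|Hxy].
  - simpl. unfold R_dist. rewrite Rminus_diag, Rabs_R0. lra.
  - apply H. split; [split; [exact I|exact Hxy]|exact Hy].
Qed.

Lemma inX_mono (f h : R -> R) : inX f -> cont_on_dom1 h ->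
  (forall x, 1 <= x -> f x <= h x) -> inX h.
Proof.
  intros [_ [H1 H2]] Hh Hfh. split; [exact Hh|split].
  - intros x Hx. specialize (H1 x Hx). specialize (Hfh x ltac:(lra)). lra.
  - intros x y Hx Hy. specialize (H2 x y Hx Hy).
    pose proof (Hfh x ltac:(lra)). pose proof (Hfh y ltac:(lra)). nra.
Qed.

Lemma fpow_mono_exponent (c c' x : R) : c <= c' -> 1 <= x -> fpow c x <= fpow c' x.
Proof. intros Hc Hx. apply Rle_Rpower; assumption. Qed.

Section Golden.

Let g := golden.

Lemma golden_sqr : g * g = g + 1.
Proof.
  unfold g, golden. pose proof (sqrt_sqrt 5 ltac:(lra)). nra.
Qed.

Lemma golden_bounds : 1 < g < 2.
Proof.
  unfold g, golden. pose proof (sqrt_sqrt 5 ltac:(lra)). pose proof (sqrt_pos 5).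
  split; nra.
Qed.

Lemma golden_weights : / g + / (g * g) = 1.
Proof.
  pose proof golden_bounds. pose proof golden_sqr.
  replace (/ g + / (g * g)) with ((g + 1) / (g * g)) by (field; lra).
  rewrite <- golden_sqr. field. lra.
Qed.

Lemma exp_convex_golden (p q : R) : exp (/ g * p + / (g * g) * q) <= / g * exp p + / (g * g) * exp q.
Proof.
  pose proof golden_bounds.
  apply exp_convex; [left; apply Rinv_0_lt_compat; nra .. | apply golden_weights].
Qed.

Lemma mul_le_golden_pow (x y : R) : 0 < x -> 0 < y ->
  y * x <= / g * Rpower x g + / (g * g) * (y * Rpower y g).
Proof.
  intros Hx Hy. pose proof golden_bounds.
  replace (y * Rpower y g) with (exp ((g * g) * ln y)).
  2: { unfold Rpower. rewrite golden_sqr, Rmult_plus_distr_r, Rmult_1_l, exp_plus, exp_ln by lra.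
       ring. }
  rewrite <- (exp_ln x) at 1 by lra. rewrite <- (exp_ln y) at 1 by lra.
  rewrite <- exp_plus. unfold Rpower.
  replace (ln y + ln x) with (/ g * (g * ln x) + / (g * g) * ((g * g) * ln y)) by (field; lra).
  apply exp_convex_golden.
Qed.

Lemma le_golden_pow_add_golden (x : R) : 0 < x -> x <= / (g * g) * Rpower x g + g.
Proof.
  intros Hx. pose proof golden_bounds.
  (* the constant is [g^g / g^2 <= g^3 / g^2] *)
  assert (Hgg : Rpower g g <= g * g * g).
  { replace (g * g * g) with (Rpower g (INR 3)) by (rewrite Rpower_pow by lra; simpl; ring).
    apply Rle_Rpower; simpl; lra. }
  rewrite <- (exp_ln x) at 1 by lra.
  replace (ln x) with (/ g * (g * ln x - ln g) + / (g * g) * (g * ln g)) by (field; lra).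
  eapply Rle_trans; [apply exp_convex_golden|].
  rewrite Rminus_def, exp_plus, exp_Ropp, exp_ln by lra. fold (Rpower x g) (Rpower g g).
  assert (Hconst : / (g * g) * Rpower g g <= / (g * g) * (g * g * g))
    by (apply Rmult_le_compat_l; [left; apply Rinv_0_lt_compat; nra | exact Hgg]).
  replace (/ (g * g) * (g * g * g)) with g in Hconst by (field; lra).
  replace (/ g * (Rpower x g * / g)) with (/ (g * g) * Rpower x g) by (field; lra).
  lra.
Qed.

Lemma inX_fpow_golden : inX (fpow g).
Proof.
  pose proof golden_bounds. pose proof golden_weights.
  split; [apply cont_on_dom1_fpow|split].
  - intros x Hx. apply Rle_ge. rewrite <- (Rpower_1 x) at 1 by lra.
    apply Rle_Rpower; lra.
  - intros x y Hx Hy. unfold fpow.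
    pose proof (mul_le_golden_pow x y ltac:(lra) ltac:(lra)) as Hyx.
    pose proof (le_golden_pow_add_golden x ltac:(lra)) as Hxx.
    assert (HP : 1 <= Rpower y g).
    { rewrite <- (Rpower_O y) by lra. apply Rle_Rpower; lra. }
    set (P := Rpower y g) in *. set (Q := Rpower x g) in *.
    assert (Hig : 0 < / g) by (apply Rinv_0_lt_compat; lra).
    assert (Hi : / (g * g) = 1 - / g) by lra.
    rewrite Hi in Hyx, Hxx.
    (* [g = 1 + 1/g <= P + (y P)/g] *)
    assert (Hg : g = 1 + / g).
    { apply Rmult_eq_reg_l with g; [|lra].
      rewrite Rmult_plus_distr_l, Rinv_r by lra. pose proof golden_sqr. lra. }
    assert (/ g * 1 <= / g * (y * P)) by (apply Rmult_le_compat_l; nra).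
    nra.
Qed.

Lemma golden_factor (c : R) : c * c - c - 1 = (c - g) * (c + g - 1).
Proof. pose proof golden_sqr. nra. Qed.

End Golden.

Lemma inX_fpow_ge_golden (c : R) : c >= golden -> inX (fpow c).
Proof.
  intros Hc. pose proof golden_bounds.
  apply (inX_mono _ _ inX_fpow_golden (cont_on_dom1_fpow c)).
  intros x Hx. apply fpow_mono_exponent; lra.
Qed.

Lemma Rpower_le_quarter (x a b e : R) : 1 <= x -> Rpower x (- e) <= / 4 -> a + e <= b ->
  Rpower x a <= / 4 * Rpower x b.
Proof.
  intros Hx Hq Hab.
  apply Rle_trans with (Rpower x (b + - e)); [apply Rle_Rpower; lra|].
  rewrite Rpower_plus. pose proof (Rpower_pos x b). nra.
Qed.

Lemma fpow_violates_X (c : R) : 1 <= c -> c * c < c + 1 ->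
  exists x y, x >= 2 /\ 1 <= y <= x /\ (y + 1) * fpow c y + fpow c x < (y + 1) * x.
Proof.
  intros Hc1 Hc.
  assert (Hic : 0 < / c <= 1).
  { split; [apply Rinv_0_lt_compat; lra|]. rewrite <- Rinv_1. apply Rinv_le_contravar; lra. }
  (* [t] is the midpoint of [(c - 1, 1/c)] and [e] half its length *)
  set (t := (c - 1 + / c) / 2). set (e := (/ c - c + 1) / 2).
  assert (He : 0 < e).
  { unfold e. replace (/ c - c + 1) with ((1 + c - c * c) * / c) by (field; lra). nra. }
  assert (Ht : 0 <= t <= 1) by (unfold t; nra).
  set (x := Rpower 4 (1 + / e)). set (y := Rpower x t).
  assert (Hx4 : 4 <= x).
  { unfold x. rewrite <- (Rpower_1 4) at 1 by lra.
    apply Rle_Rpower; [lra|]. pose proof (Rinv_0_lt_compat e He). lra. }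
  assert (Hxe : Rpower x (- e) <= / 4).
  { unfold x. rewrite Rpower_mult.
    replace ((1 + / e) * - e) with (- (e + 1)) by (field; lra).
    rewrite Rpower_Ropp. rewrite <- (Rpower_1 4) at 2 by lra.
    apply Rinv_le_contravar; [apply Rpower_pos|]. apply Rle_Rpower; lra. }
  assert (Hy1 : 1 <= y) by (unfold y; rewrite <- (Rpower_O x) by lra; apply Rle_Rpower; lra).
  assert (Hyx : y <= x) by (unfold y; rewrite <- (Rpower_1 x) at 2 by lra; apply Rle_Rpower; lra).
  exists x, y. split; [lra|split; [lra|]]. unfold fpow.
  set (Z := Rpower x (t + 1)).
  assert (HZ : Z = y * x) by (unfold Z, y; rewrite Rpower_plus, Rpower_1 by lra; reflexivity).
  assert (Htc : t * c + e <= 1).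
  { replace (t * c + e) with (1 + (c - 1) * (c * c - c - 1) * / c / 2) by (unfold t, e; field; lra).
    assert (0 <= (c - 1) * (1 + c - c * c)) by nra. nra. }
  assert (Hyc : y * Rpower y c <= / 4 * Z).
  { replace (y * Rpower y c) with (Rpower x (t + t * c))
      by (unfold y; rewrite Rpower_plus, Rpower_mult; reflexivity).
    apply (Rpower_le_quarter _ _ _ e); lra. }
  assert (Hxc : Rpower x c <= / 4 * Z)
    by (apply (Rpower_le_quarter _ _ _ e); [lra|exact Hxe|unfold t, e; lra]).
  assert (Py : 0 < Rpower y c) by apply Rpower_pos.
  assert (0 < Z) by apply Rpower_pos.
  nra.
Qed.

Lemma ge_golden_of_inX_fpow (c : R) : inX (fpow c) -> c >= golden.
Proof.
  intros HX. destruct (Rlt_or_le c golden) as [Hlt|Hge]; [exfalso|lra].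
  destruct HX as [_ [H1 H2]]. destruct (Rlt_or_le c 1) as [Hc1|Hc1].
  - specialize (H1 (3/2) ltac:(lra)). unfold fpow in H1.
    assert (Rpower (3/2) c < Rpower (3/2) 1) by (apply Rpower_lt; lra).
    rewrite Rpower_1 in H by lra. lra.
  - assert (Hc : c * c < c + 1).
    { pose proof golden_bounds. pose proof (golden_factor c). nra. }
    destruct (fpow_violates_X c Hc1 Hc) as [x [y [Hx [Hy Hlt']]]].
    specialize (H2 x y Hx Hy). lra.
Qed.

Theorem mainTheorem1 :
  (forall c : R, inX (fpow c) <-> c >= golden) /\ (exists f : R -> R, inX f).
Proof.
  split.
  - intros c. split; [apply ge_golden_of_inX_fpow | apply inX_fpow_ge_golden].
  - exists (fpow golden). apply inX_fpow_golden.
Qed.
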